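(* We have $\liminf_{n\to\infty}\deg(\mathscr B:\mathrm{Part}(n)\to\mathrm{Part}(n))\geq 2$. Moreover, for every positive integer $n$, \[\deg(\mathscr B:\mathrm{Part}(n)\to\mathrm{Part}(n))\leq\left\lfloor\frac{1+\sqrt{\tfrac{8}{3}n+1}}{2}\right\rfloor.\]
   Context: For finite sets $X,Y$ and $f:X\to Y$, $\deg(f)=\frac{1}{|X|}\sum_{y\in Y}|f^{-1}(y)|^2$. $\mathrm{Part}(n)$ is the set of partitions of $n$, i.e. tuples $(\lambda_1,\dots,\lambda_\ell)$ of positive integers in nonincreasing order summing to $n$. Bulgarian solitaire $\mathscr B:\mathrm{Part}(n)\to\mathrm{Part}(n)$ sends $\lambda=(\lambda_1,\ldots,\lambda_\ell)$ to the partition obtained by arranging the numbers $\ell,\lambda_1-1,\ldots,\lambda_\ell-1$ in nonincreasing order and deleting any zeros. For example, $\mathscr B(8,3,3,1,1)=(7,5,2,2)$. *)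

From mathcomp Require Import all_boot all_order all_algebra.
Set Implicit Arguments. Unset Strict Implicit. Unset Printing Implicit Defensive.
Import Order.TTheory GRing.Theory Num.Theory.

Definition is_part (n : nat) (s : seq nat) : bool :=
  [&& sorted geq s, all (fun x => 0 < x) s & sumn s == n].

Fixpoint cands (n k : nat) : seq (seq nat) :=
  if k is k'.+1 then [::] :: [seq x :: s | x <- iota 1 n, s <- cands n k']
  else [:: [::]].

Definition parts (n : nat) : seq (seq nat) := [seq s <- cands n n | is_part n s].

Definition Part (n : nat) := seq_sub (parts n).

Definition bulg (s : seq nat) : seq nat :=
  sort geq [seq x <- size s :: map predn s | 0 < x].

Lemma cands_mem n k s : size s <= k -> all (fun x => 0 < x <= n) s -> s \in cands n k.
Proof.
elim: k s => [|k IH] [|x s] //= Hs /andP[Hx Hall].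
rewrite in_cons /=; apply/allpairsP; exists (x, s) => /=; split => //.
  by rewrite mem_iota add1n ltnS.
exact: IH.
Qed.

Lemma part_bounds n s : is_part n s -> size s <= n /\ all (fun x => 0 < x <= n) s.
Proof.
case/and3P=> _ Hpos /eqP <-.
elim: s Hpos => [|x s IH] //= /andP[Hx Hp]; have [H1 H2] := IH Hp.
split; first by rewrite -add1n leq_add.
rewrite Hx leq_addr /=; apply: sub_all H2 => y /andP[-> Hy] /=.
exact: leq_trans Hy (leq_addl _ _).
Qed.

Lemma mem_parts n s : (s \in parts n) = is_part n s.
Proof.
rewrite mem_filter; case H: (is_part n s) => //=.
by have [H1 H2] := part_bounds H; exact: cands_mem.
Qed.

Lemma sumn_filter_pos (l : seq nat) : sumn [seq x <- l | 0 < x] = sumn l.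
Proof. by elim: l => [|[|x] l IH] //=; rewrite IH. Qed.

Lemma sumn_pred (s : seq nat) : all (fun x => 0 < x) s -> size s + sumn (map predn s) = sumn s.
Proof.
elim: s => [|x s IH] //= /andP[Hx Hs]; rewrite -(IH Hs).
by case: x Hx => // x _ /=; rewrite addSn addnCA addSn.
Qed.

Lemma bulg_part n s : is_part n s -> is_part n (bulg s).
Proof.
case/and3P=> _ Hpos Hsum; apply/and3P; split.
- by apply: sort_sorted => x y; exact: leq_total.
- by rewrite (perm_all _ (permEl (perm_sort _ _))) filter_all.
- rewrite (perm_sumn (permEl (perm_sort _ _))) sumn_filter_pos /= sumn_pred //.
Qed.

Lemma bulg_mem n (x : Part n) : bulg (ssval x) \in parts n.
Proof. by rewrite mem_parts; apply: bulg_part; rewrite -mem_parts; exact: ssvalP. Qed.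

Definition B (n : nat) (x : Part n) : Part n := SeqSub (bulg_mem x).

Definition deg (X Y : finType) (f : X -> Y) : rat :=
  (\sum_(y : Y) (#|[set x | f x == y]|%:R) ^+ 2) / (#|X|%:R).

Definition degB (n : nat) : rat := deg (@B n).

From mathcomp Require Import all_boot all_order all_algebra.
From mathcomp Require Import all_classical all_reals all_analysis.
From mathcomp Require Import lra zify.
Set Implicit Arguments. Unset Strict Implicit. Unset Printing Implicit Defensive.
Import Order.TTheory GRing.Theory Num.Theory.

(* Write l(y) for the number of parts of y and y1 for its largest part.
   Upper bound: a preimage x of y under B is determined by l(x), which is a part
   of y with l(x) >= l(y) - 1.  If d distinct parts of y are at least
   l(y) - 1 >= d - 1, then n >= 3 d (d - 1) / 2; so every fiber, hence deg B,
   is at most (1 + sqrt (8 n / 3 + 1)) / 2.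
   Lower bound: k ^ 2 >= 3 k - 2 for k >= 1 gives deg f >= 3 - 2 |im f| / |X|.
   Every B x satisfies l <= y1 + 1, and conjugation shows that at most
   (p(n) + b(n)) / 2 partitions do, b(n) counting the balanced partitions
   (|y1 - l(y)| <= 1); so deg B >= 2 - b(n) / p(n).  Finally b(n) = o(p(n)):
   hooking j of the ones of y onto its first row shifts l - y1 by 2 j, so few
   balanced partitions have many ones; cutting cells off the first row creates
   ones, so few partitions have few ones unless their parts are bounded; and
   partitions with parts at most L are polynomially many in n while p(n) is not. *)

Lemma sum_nat_boolE (T : Type) (r : seq T) (a : pred T) :
  \sum_(x <- r) (a x : nat) = count a r.
Proof. by elim: r => [|x r IH]; rewrite ?big_nil ?big_cons //= IH. Qed.

Lemma sum_nat_const_seq (T : Type) (r : seq T) (c : nat) : \sum_(x <- r) c = size r * c.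
Proof. by rewrite big_const_seq count_predT iter_addn_0 mulnC. Qed.

Lemma leq_count_inj (T U : eqType) (s : seq T) (t : seq U) (a : pred T) (b : pred U)
    (f : T -> U) :
  uniq s -> {in [pred x in s | a x] &, injective f} ->
  (forall x, x \in s -> a x -> (f x \in t) && b (f x)) -> count a s <= count b t.
Proof.
move=> Us f_inj ft; rewrite -!size_filter -(size_map f) uniq_leq_size //.
  rewrite map_inj_in_uniq ?filter_uniq // => x y.
  by rewrite !mem_filter !(andbC (a _)); exact: f_inj.
move=> y /mapP[x]; rewrite mem_filter => /andP[ax sx] ->.
by rewrite mem_filter andbC; apply: ft.
Qed.

Lemma leq_count_mul_inj (T U : eqType) (s : seq T) (t : seq U) (a : pred T) (b : pred U)
    (f : T -> U) (g : T -> nat) k :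
  uniq s -> {in [pred x in s | a x] &, injective (fun x => (f x, g x))} ->
  (forall x, x \in s -> a x -> [&& f x \in t, b (f x) & g x < k]) ->
  count a s <= k * count b t.
Proof.
move=> Us fg_inj fgt.
have -> : k * count b t = count predT [seq (y, i) | y <- [seq y <- t | b y], i <- iota 0 k].
  by rewrite count_predT size_allpairs size_filter size_iota mulnC.
apply: (leq_count_inj (b := predT) Us fg_inj) => x sx ax; have /and3P[fx bx gx] := fgt x sx ax.
by rewrite andbT; apply/allpairsP; exists (f x, g x); rewrite /= mem_filter bx fx mem_iota.
Qed.

Lemma count_uniq_le1 (s : seq nat) (a : pred nat) :
  uniq s -> {in a &, forall i j, i = j} -> count a s <= 1.
Proof.
move=> Us a1; rewrite -size_filter.
have Uf : uniq [seq i <- s | a i] by rewrite filter_uniq.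
case Es: [seq i <- s | a i] Uf => [//|i0 r] Uf.
have a_i0 : a i0 by have := mem_head i0 r; rewrite -Es mem_filter => /andP[].
rewrite (@uniq_leq_size _ (i0 :: r) [:: i0]) // => i.
by rewrite -Es mem_filter mem_seq1 => /andP[ai _]; apply/eqP; apply: a1.
Qed.

Lemma sum_count_le_size (T : Type) (r : seq T) (I : seq nat) (a : nat -> pred T) :
  (forall x, \sum_(i <- I) (a i x : nat) <= 1) -> \sum_(i <- I) count (a i) r <= size r.
Proof.
move=> a1; rewrite -sum1_size (eq_bigr (fun i => \sum_(x <- r) (a i x : nat))).
  by rewrite exchange_big; apply: leq_sum => x _; apply: a1.
by move=> i _; rewrite sum_nat_boolE.
Qed.

Lemma leq_sumn_subseq (s1 s2 : seq nat) : subseq s1 s2 -> sumn s1 <= sumn s2.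
Proof.
elim: s2 s1 => [|y s2 IH] [|x s1] //=.
case: eqP => [-> /IH|_ /IH /= le12]; first by rewrite leq_add2l.
exact: leq_trans le12 (leq_addl _ _).
Qed.

Lemma size_le_sumn (s : seq nat) : all (leq 1) s -> size s <= sumn s.
Proof. by elim: s => [|x s IH] //= /andP[x_gt0 /IH]; lia. Qed.

Lemma exists_max_seq (s : seq nat) : s != [::] -> exists2 M, M \in s & all (geq M) s.
Proof.
elim: s => [|x [|y s] IH] // _; first by exists x; rewrite ?mem_seq1 //= leqnn.
have [M Ms sM] := IH isT; case: (leqP x M) => [xM | Mx].
  by exists M; [rewrite in_cons Ms orbT | apply/andP].
exists x; rewrite ?mem_head //= leqnn /=.
by apply: sub_all sM => z /= zM; apply: leq_trans zM (ltnW Mx).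
Qed.

(* The k-th largest of distinct values that are at least [a] is at least [a + k - 1]. *)
Lemma uniq_sumn_ge (a : nat) (s : seq nat) : uniq s -> all (leq a) s ->
  size s * (size s).-1 + 2 * a * size s <= 2 * sumn s.
Proof.
move szs : (size s) => k; elim: k s szs => [|k IH] s szs Us As; first by rewrite muln0.
have [M Ms sM] : exists2 M, M \in s & all (geq M) s by apply: exists_max_seq; rewrite -size_eq0 szs.
have aM : a + k <= M.
  have : size s <= size (iota a (M - a).+1).
    apply: uniq_leq_size => // z zs; rewrite mem_iota.
    by have := allP As z zs; have := allP sM z zs; rewrite /=; lia.
  by rewrite size_iota szs; have := allP As M Ms; rewrite /=; lia.
have sumsE : sumn s = M + sumn (rem M s) by rewrite (perm_sumn (perm_to_rem Ms)).
have Ar : all (leq a) (rem M s) by apply/allP => z /mem_rem /(allP As).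
have szr : size (rem M s) = k by rewrite size_rem // szs.
have := IH (rem M s) szr (rem_uniq _ Us) Ar.
rewrite sumsE /=; nia.
Qed.

Lemma geq_trans : transitive geq. Proof. exact: rev_trans leq_trans. Qed.
Lemma geq_anti : antisymmetric geq.
Proof. by move=> x y /= xy; apply/anti_leq; rewrite andbC. Qed.
Lemma geq_total : total geq. Proof. by move=> x y /=; rewrite leq_total. Qed.

Lemma sorted_geq_le_head (s : seq nat) : sorted geq s -> all (geq (head 0 s)) s.
Proof. by case: s => [|x s] //= Sxs; rewrite leqnn (order_path_min geq_trans Sxs). Qed.

Lemma sorted_geq_split (a : nat) (s : seq nat) : sorted geq s -> all (leq a) s ->
  s = [seq x <- s | a < x] ++ nseq (count_mem a s) a.
Proof.
elim: s => [|x s IH] //= Sxs /andP[ax As]; have Ss := path_sorted Sxs.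
case: ltngtP ax => // [ax _ | xa _]; first by rewrite /= add0n -IH.
have sa : all (pred1 a) s.
  apply/allP => y ys; have := allP As y ys; have := allP (order_path_min geq_trans Sxs) y ys.
  by rewrite /= -xa; lia.
rewrite (@eq_in_filter _ _ pred0) ?filter_pred0 => [|y /(allP sa) /= /eqP ->]; last by rewrite ltnn.
have -> : count_mem a s = size s by apply/eqP; rewrite -all_count.
by rewrite /= -xa -(all_pred1P _ _ sa).
Qed.

Lemma sorted_geq_map_predn (s : seq nat) : sorted geq s -> sorted geq (map predn s).
Proof. by apply: homo_sorted => x y /=; lia. Qed.

Lemma map_succn_predn (s : seq nat) : all (leq 1) s -> map succn (map predn s) = s.
Proof. by elim: s => [|x s IH] //= /andP[x_gt0 s_gt0]; rewrite IH // prednK. Qed.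

Lemma leq_head_sort_geq (s : seq nat) x : x \in s -> x <= head 0 (sort geq s).
Proof.
by rewrite -(mem_sort geq) => /(allP (sorted_geq_le_head (sort_sorted geq_total s))).
Qed.

Lemma head_sort_geq_le (s : seq nat) M : all (geq M) s -> head 0 (sort geq s) <= M.
Proof.
case Es : (sort geq s) => [//|h r] sM /=.
by have := mem_head h r; rewrite -Es mem_sort => /(allP sM).
Qed.

(** * Partitions and their conjugates *)

Lemma uniq_cands n k : uniq (cands n k).
Proof.
elim: k => [|k IH] //=; apply/andP; split; first by apply/negP => /allpairsP[[x s] /= [_ _]].
by rewrite allpairs_uniq ?iota_uniq // => -[x s] [y t] _ _ /= [-> ->].
Qed.

Lemma uniq_parts n : uniq (parts n).
Proof. exact/filter_uniq/uniq_cands. Qed.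

Lemma card_Part n : #|{: Part n}| = size (parts n).
Proof. exact/card_seq_sub/uniq_parts. Qed.

Lemma card_Part_set n (a : pred (seq nat)) :
  #|[set x : Part n | a (ssval x)]| = count a (parts n).
Proof.
have enumE : index_enum (Part n) = seq_sub_enum (parts n) by rewrite /index_enum unlock /= unlock.
rewrite -sum1_card big_mkcond -sum_nat_boolE -[in RHS](val_seq_sub_enum (uniq_parts n)).
by rewrite big_map -enumE; apply: eq_bigr => x _; rewrite inE; case: (a _).
Qed.

Lemma is_part_ssval n (x : Part n) : is_part n (ssval x).
Proof. by rewrite -mem_parts (ssvalP x). Qed.

Lemma size_part_gt0 n s : 0 < n -> is_part n s -> 0 < size s.
Proof. by case: s => [|x s] // n_gt0 /and3P[_ _ /eqP sum_s]; rewrite -sum_s in n_gt0. Qed.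

Lemma size_parts_gt0 n : 0 < size (parts n).
Proof.
case: n => [|n]; first by [].
rewrite -has_predT; apply/hasP; exists [:: n.+1] => //.
by rewrite mem_parts /is_part /= addn0 eqxx.
Qed.

Definition conjp (s : seq nat) := [seq count (fun x => i < x) s | i <- iota 0 (head 0 s)].

Lemma count_ltn_iota x h : x <= h -> count (fun i => i < x) (iota 0 h) = x.
Proof.
move=> xh; rewrite -(subnKC xh) iotaD count_cat add0n.
rewrite (@eq_in_count _ _ predT) ?count_predT ?size_iota; last by move=> i; rewrite mem_iota.
by rewrite (@eq_in_count _ _ pred0) ?count_pred0 ?addn0 // => i; rewrite mem_iota /=; lia.
Qed.

Lemma sumn_count_gt_iota (s : seq nat) h : all (geq h) s ->
  sumn [seq count (fun x => i < x) s | i <- iota 0 h] = sumn s.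
Proof.
move=> sh; rewrite !sumnE big_map (eq_bigr (fun i => \sum_(x <- s) (i < x : nat))).
  rewrite exchange_big; apply: eq_big_seq => x xs /=.
  by rewrite sum_nat_boolE count_ltn_iota //; apply: (allP sh).
by move=> i _; rewrite sum_nat_boolE.
Qed.

Lemma ltn_count_gt_nth (s : seq nat) i j : sorted geq s ->
  (j < count (fun x => i < x) s) = (i < nth 0 s j).
Proof.
elim: s j => [|x s IH] j /=; first by rewrite nth_nil ltn0.
move=> Sxs; have Ss := path_sorted Sxs; have sx := order_path_min geq_trans Sxs.
case: (ltnP i x) => ix; first by case: j => [|j] //=; rewrite add1n ltnS IH.
have -> : count (fun y => i < y) s = 0.
  apply/eqP; rewrite -leqn0 leqNgt -has_count; apply/hasPn => y ys /=.
  by rewrite -leqNgt (leq_trans (allP sx y ys)).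
case: j => [|j] /=; first by rewrite [RHS]ltnNge ix.
case: (ltnP j (size s)) => js; last by rewrite nth_default.
by rewrite [RHS]ltnNge (leq_trans (allP sx _ (mem_nth 0 js))).
Qed.

Lemma size_conjp s : size (conjp s) = head 0 s.
Proof. by rewrite size_map size_iota. Qed.

Lemma head_conjp n s : is_part n s -> head 0 (conjp s) = size s.
Proof.
case: s => [|x s] //= /and3P[_ /= /andP[x_gt0 s_gt0] _].
rewrite /conjp /=; case: x x_gt0 => // x _ /=.
by rewrite add1n; congr S; apply/eqP; rewrite -all_count.
Qed.

Lemma conjp_part n s : is_part n s -> is_part n (conjp s).
Proof.
case/and3P=> Ss s_gt0 /eqP sum_s; apply/and3P; split.
- rewrite /conjp sorted_map; apply: sub_sorted (iota_sorted 0 _) => i j /= ij.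
  by apply: sub_count => x /=; apply: leq_ltn_trans.
- apply/allP => c /mapP[i]; rewrite mem_iota add0n => ih ->.
  rewrite -has_count; apply/hasP; exists (head 0 s) => //.
  by case: s Ss s_gt0 sum_s ih => //= x s _ _ _ _; rewrite mem_head.
- by rewrite /conjp sumn_count_gt_iota ?sum_s // sorted_geq_le_head.
Qed.

Lemma conjpK n s : is_part n s -> conjp (conjp s) = s.
Proof.
move=> ps; have Ss : sorted geq s by case/and3P: ps.
rewrite {1}/conjp (head_conjp ps) -[RHS](mkseq_nth 0) /mkseq; apply/eq_in_map => j.
rewrite mem_iota add0n => js; rewrite /conjp count_map.
rewrite (eq_count (a2 := fun i => i < nth 0 s j)) => [|i]; last by rewrite /= ltn_count_gt_nth.
exact/count_ltn_iota/(allP (sorted_geq_le_head Ss))/mem_nth.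
Qed.

(** * Preimages under Bulgarian solitaire *)

Lemma perm_bulg (s : seq nat) : perm_eq (bulg s) [seq x <- size s :: map predn s | 0 < x].
Proof. exact: permEl (perm_sort _ _). Qed.

Lemma bulg_inj n m s t : is_part n s -> is_part m t ->
  bulg s = bulg t -> size s = size t -> s = t.
Proof.
move=> /and3P[Ss s_gt0 _] /and3P[St t_gt0 _] bst szst.
have all0 u : all (leq 0) u by apply/allP.
have := perm_bulg t; rewrite -bst (permPl (perm_bulg s)).
case szs : (size s) szst => [|l] szt.
  by move: szs szt => /eqP; rewrite size_eq0 => /eqP -> /esym/eqP; rewrite size_eq0 => /eqP ->.
rewrite -szt /= perm_cons => pst.
have Sps := sorted_geq_map_predn Ss; have Spt := sorted_geq_map_predn St.
have Ef := sorted_eq geq_trans geq_anti (sorted_filter geq_trans _ Sps)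
  (sorted_filter geq_trans _ Spt) pst.
have Ec : count_mem 0 (map predn s) = count_mem 0 (map predn t).
  have := congr1 size (sorted_geq_split Sps (all0 _)).
  have := congr1 size (sorted_geq_split Spt (all0 _)).
  by rewrite !size_cat !size_nseq !size_map Ef szs szt => -> /eqP; rewrite eqn_add2l => /eqP.
rewrite -(map_succn_predn s_gt0) -(map_succn_predn t_gt0).
by rewrite (sorted_geq_split Sps (all0 _)) (sorted_geq_split Spt (all0 _)) Ef Ec.
Qed.

Definition nlarge_parts (y : seq nat) := count (fun v => size y <= v.+1) (undup y).

Lemma size_bulg (s : seq nat) : 0 < size s -> size (bulg s) = (count (leq 1) (map predn s)).+1.
Proof. by move=> s_gt0; rewrite size_sort size_filter /= s_gt0. Qed.

Lemma size_mem_bulg (s : seq nat) : 0 < size s -> size s \in bulg s.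
Proof. by move=> s_gt0; rewrite mem_sort mem_filter /= s_gt0 mem_head. Qed.

Lemma card_fiber_B_le n (y : Part n) : 0 < n ->
  #|[set x : Part n | B x == y]| <= nlarge_parts (ssval y).
Proof.
move=> n_gt0; have -> : [set x | B x == y] = [set x : Part n | bulg (ssval x) == ssval y].
  by apply/setP => x; rewrite !inE.
rewrite (card_Part_set n (fun s => bulg s == ssval y)) /nlarge_parts.
apply: (leq_count_inj (f := size) (uniq_parts n)) => [s t|s].
  rewrite !inE !mem_parts => /andP[ps /eqP bs] /andP[pt /eqP bt].
  by apply: bulg_inj ps pt _; rewrite bs bt.
rewrite mem_parts => ps /eqP <-; have s_gt0 := size_part_gt0 n_gt0 ps.
by rewrite mem_undup size_mem_bulg // size_bulg // ltnS -(size_map predn) count_size.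
Qed.

Lemma nlarge_parts_bound n s : is_part n s ->
  3 * (nlarge_parts s * (nlarge_parts s).-1) <= 2 * n.
Proof.
case/and3P=> _ _ /eqP sum_s; set u := [seq v <- undup s | size s <= v.+1].
have -> : nlarge_parts s = size u by rewrite size_filter.
have Au : all (leq (size s).-1) u by apply/allP => v; rewrite mem_filter => /andP[? _]; lia.
have szu : size u <= size s.
  by rewrite size_filter (leq_trans (count_size _ _)) // size_undup.
have sumu : sumn u <= n.
  by rewrite -sum_s leq_sumn_subseq // (subseq_trans (filter_subseq _ _)) ?undup_subseq.
have := uniq_sumn_ge (filter_uniq _ (undup_uniq s)) Au.
have : size u * (size u).-1 <= size u * (size s).-1 by rewrite leq_mul2l; apply/orP; right; lia.
by rewrite [2 * _ * _]mulnAC -[2 * _ * _]mulnA -/u; lia.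
Qed.

(** * Growth of the partition numbers *)

Definition nbounded n L := count (fun y => head 0 y <= L) (parts n).

Lemma nbounded_mono n : {homo nbounded n : L L' / L <= L'}.
Proof. by move=> L L' LL'; apply: sub_count => y /= /leq_trans; apply. Qed.

(* A partition with parts at most [L] is determined by the multiplicities of [1, ..., L]. *)
Lemma nbounded_le_pow n L : nbounded n L <= n.+1 ^ L.
Proof.
have -> : n.+1 ^ L = count predT (enum {ffun 'I_L -> 'I_n.+1}).
  by rewrite count_predT -cardE card_ffun !card_ord.
pose mult (y : seq nat) := [ffun i : 'I_L => (inord (count_mem i.+1 y) : 'I_n.+1)].
apply: (leq_count_inj (f := mult) (uniq_parts n)) => [y y'|y _ _]; last by rewrite mem_enum.
rewrite !inE !mem_parts => /andP[py yL] /andP[py' y'L] my.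
have mult_le z : is_part n z -> forall v, count_mem v z <= n.
  by move=> /and3P[_ z_gt0 /eqP <-] v; apply: leq_trans (count_size _ _) (size_le_sumn z_gt0).
have mult0 z : is_part n z -> head 0 z <= L -> forall v, ~~ (0 < v <= L) -> count_mem v z = 0.
  move=> /and3P[Sz z_gt0 _] zL v vL; apply/eqP; rewrite -leqn0 leqNgt -has_count.
  apply/hasPn => x xz; apply: contra vL => /eqP <-.
  by rewrite (allP z_gt0 x xz) (leq_trans (allP (sorted_geq_le_head Sz) x xz)).
case/and3P: (py) => Sy _ _; case/and3P: (py') => Sy' _ _.
apply: (sorted_eq geq_trans geq_anti Sy Sy'); apply/allP => v _ /=; apply/eqP.
have [vL|vL] := boolP (0 < v <= L); last by rewrite (mult0 _ py yL v vL) (mult0 _ py' y'L v vL).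
have vL' : v.-1 < L by move: vL; lia.
have := congr1 (fun g : {ffun 'I_L -> 'I_n.+1} => nat_of_ord (g (Ordinal vL'))) my.
by rewrite /mult !ffunE /= !inordK ?ltnS ?mult_le // prednK //; case/andP: vL.
Qed.

Section PartsOfMult.
Variables n L : nat.
Let N := n %/ (L.+2) ^ 2.

Definition parts_of_mult (f : {ffun 'I_L.+1 -> 'I_N.+1}) :=
  flatten [seq nseq (f i) i.+2 | i <- enum 'I_L.+1].

Lemma count_parts_of_mult f (j : 'I_L.+1) : count_mem j.+2 (parts_of_mult f) = f j.
Proof.
rewrite count_flatten -map_comp sumnE big_map big_enum (bigD1 j) //= count_nseq /= eqxx mul1n.
rewrite big1 ?addn0 // => i ij; rewrite count_nseq /=.
by case: eqP => // -[/val_inj eij]; rewrite eij eqxx in ij.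
Qed.

Lemma sumn_parts_of_mult f : sumn (parts_of_mult f) <= n.
Proof.
rewrite sumn_flatten -map_comp sumnE big_map big_enum /=.
apply: leq_trans (_ : \sum_(i < L.+1) L.+2 * N <= _).
  by apply: leq_sum => i _; rewrite sumn_nseq; apply: leq_mul; [rewrite ltnS | rewrite -ltnS].
rewrite sum_nat_const card_ord mulnA; apply: leq_trans (_ : L.+2 ^ 2 * N <= _).
  by rewrite leq_mul2r leq_mul2r leqnSn !orbT.
by rewrite mulnC leq_divM.
Qed.
End PartsOfMult.

Lemma size_parts_ge_pow n L : (n %/ L.+2 ^ 2).+1 ^ L.+1 <= size (parts n).
Proof.
set N := n %/ L.+2 ^ 2.
have -> : N.+1 ^ L.+1 = count predT (enum {ffun 'I_L.+1 -> 'I_N.+1}).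
  by rewrite count_predT -cardE card_ffun !card_ord.
pose fill (f : {ffun 'I_L.+1 -> 'I_N.+1}) :=
  sort geq (parts_of_mult f ++ nseq (n - sumn (parts_of_mult f)) 1).
have perm_fill f : perm_eq (fill f) (parts_of_mult f ++ nseq (n - sumn (parts_of_mult f)) 1).
  exact: permEl (perm_sort _ _).
rewrite -count_predT; apply: (leq_count_inj (f := fill) (enum_uniq _)) => [f f' _ _ ff'|f _ _].
  apply/ffunP => j; apply: val_inj; have := congr1 (count_mem j.+2) ff'.
  by rewrite !(permP (perm_fill _)) !count_cat !count_nseq !count_parts_of_mult /= !mul0n !addn0.
rewrite mem_parts andbT; apply/and3P; split; first exact: sort_sorted geq_total _.
  rewrite (perm_all _ (perm_fill f)) all_cat; apply/andP; split; last first.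
    by apply/allP => z; rewrite mem_nseq => /andP[_ /eqP ->].
  by apply/allP => z /flattenP[_ /mapP[i _ ->]]; rewrite mem_nseq => /andP[_ /eqP ->].
by rewrite (perm_sumn (perm_fill f)) sumn_cat sumn_nseq mul1n subnKC // sumn_parts_of_mult.
Qed.

Lemma nbounded_negligible L m :
  exists N0, forall n, N0 <= n -> m * nbounded n L <= size (parts n).
Proof.
set c := L.+2 ^ 2; have c_gt0 : 0 < c by rewrite expn_gt0.
exists (c ^ L.+1 * m) => n mn; set N := n %/ c.
have nN : n.+1 <= c * N.+1 by have := ltn_pmod n c_gt0; have := divn_eq n c; rewrite -/N; nia.
have : nbounded n L * n.+1 <= c ^ L.+1 * size (parts n).
  apply: leq_trans (_ : n.+1 ^ L * n.+1 <= _); first by rewrite leq_mul2r nbounded_le_pow orbT.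
  rewrite -expnSr; apply: leq_trans (_ : (c * N.+1) ^ L.+1 <= _); first by rewrite leq_exp2r.
  by rewrite expnMn leq_mul2l size_parts_ge_pow orbT.
have c_pos : 0 < c ^ L.+1 by rewrite expn_gt0 c_gt0.
move=> bounded_le; rewrite -(leq_pmul2l c_pos); apply: leq_trans bounded_le.
by rewrite mulnA mulnC leq_mul2l ltnW ?orbT.
Qed.

(** * Balanced partitions are rare *)

Definition bulg_shape (y : seq nat) := size y <= (head 0 y).+1.
Definition balanced (y : seq nat) := (head 0 y <= (size y).+1) && (size y <= (head 0 y).+1).

Lemma bulg_shape_bulg n s : 0 < n -> is_part n s -> bulg_shape (bulg s).
Proof.
move=> n_gt0 ps; have s_gt0 := size_part_gt0 n_gt0 ps.
have hd : size s <= head 0 (bulg s).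
  by apply: leq_head_sort_geq; rewrite mem_filter /= s_gt0 mem_head.
rewrite /bulg_shape size_bulg // ltnS; apply: leq_trans hd.
by rewrite -[leqRHS](size_map predn) count_size.
Qed.

Lemma card_codom_B_le n : 0 < n -> #|codom (@B n)| <= count bulg_shape (parts n).
Proof.
move=> n_gt0; rewrite -card_Part_set; apply/subset_leq_card/fintype.subsetP => _ /codomP[x ->].
by rewrite inE (bulg_shape_bulg n_gt0) // is_part_ssval.
Qed.

Lemma count_wide_le_tall n :
  count (fun y => (size y).+2 <= head 0 y) (parts n) <=
  count (fun y => (head 0 y).+2 <= size y) (parts n).
Proof.
apply: (leq_count_inj (f := conjp) (uniq_parts n)) => [s t|s]; rewrite ?inE !mem_parts.
  by move=> /andP[ps _] /andP[pt _] st; rewrite -(conjpK ps) -(conjpK pt) st.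
by move=> ps; rewrite (conjp_part ps) (head_conjp ps) size_conjp.
Qed.

Lemma count_bulg_shape_le n :
  2 * count bulg_shape (parts n) <= size (parts n) + count balanced (parts n).
Proof.
have := count_wide_le_tall n; rewrite -(count_predT (parts n)).
have split3 (r : seq (seq nat)) :
  count predT r = count (fun y => (size y).+2 <= head 0 y) r + count balanced r +
                  count (fun y => (head 0 y).+2 <= size y) r.
  elim: r => [|y r IH] //=; rewrite IH /balanced; case: leqP; case: leqP; case: leqP => /=; lia.
have split2 (r : seq (seq nat)) :
  count bulg_shape r = count (fun y => (size y).+2 <= head 0 y) r + count balanced r.
  elim: r => [|y r IH] //=; rewrite IH /bulg_shape /balanced; case: leqP; case: leqP => /=; lia.
by rewrite split3 split2; lia.
Qed.

Definition ones (s : seq nat) := count_mem 1 s.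

Lemma ones_suffix (t : seq nat) j : sorted geq t -> all (leq 1) t ->
  j <= ones t -> drop (size t - j) t = nseq j 1.
Proof.
move=> St t_gt0 jt; rewrite (sorted_geq_split St t_gt0) size_cat size_nseq drop_cat.
case: ltnP => [|_]; first by rewrite /ones in jt; lia.
by rewrite drop_nseq; congr nseq; rewrite /ones in jt; lia.
Qed.

Lemma ltn_ones_cons j x t : j < ones (x :: t) -> j <= ones t.
Proof. by rewrite /ones /=; case: (x == 1) => /=; lia. Qed.

(* Moves the last [j] parts, which are ones when [j < ones s], onto the first row. *)
Definition hook j (s : seq nat) :=
  if s is x :: t then (x + j) :: take (size t - j) t else [::].

Lemma hook_part n s j : is_part n s -> j < ones s ->
  [/\ is_part n (hook j s), head 0 (hook j s) = head 0 s + j & size (hook j s) + j = size s].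
Proof.
case: s => [|x t] // /and3P[Ss /= /andP[x_gt0 t_gt0] /eqP sum_s] /ltn_ones_cons jt.
have St := path_sorted Ss; have tx := order_path_min geq_trans Ss.
have jsz : j <= size t by apply: leq_trans jt (count_size _ _).
split => //=; last by rewrite size_take; case: ifP => tj; clear -tj jsz; lia.
have sumtE : sumn t = sumn (take (size t - j) t) + j.
  by rewrite -{1}(cat_take_drop (size t - j) t) (ones_suffix St t_gt0 jt) sumn_cat sumn_nseq mul1n.
apply/and3P; split.
- rewrite /= (path_sortedE geq_trans) take_sorted // andbT.
  by apply/allP => z /mem_take /(allP tx) /=; lia.
- by rewrite /= addn_gt0 x_gt0; apply/allP => z /mem_take /(allP t_gt0).
- by rewrite /= -sum_s sumtE; apply/eqP; lia.
Qed.

Lemma hook_inj n m s s' j : is_part n s -> is_part m s' -> j < ones s -> j < ones s' ->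
  hook j s = hook j s' -> s = s'.
Proof.
case: s => [|x t] //; case: s' => [|x' t'] //.
move=> /and3P[Ss /= /andP[_ t_gt0] _] /and3P[Ss' /= /andP[_ t'_gt0] _].
move=> /ltn_ones_cons jt /ltn_ones_cons jt' [/eqP]; rewrite eqn_add2r => /eqP <- tt'.
rewrite -(cat_take_drop (size t - j) t) -(cat_take_drop (size t' - j) t') tt'.
by rewrite (ones_suffix (path_sorted Ss) t_gt0 jt) (ones_suffix (path_sorted Ss') t'_gt0 jt').
Qed.

(* [size y - head y = b - a] without truncated subtraction; [hook j] maps the class
   [(a, b)] into the class [(a + 2 j, b)]. *)
Definition diag_class a b (y : seq nat) := size y + a == head 0 y + b.

Lemma count_diag_class_le n a b K :
  K * count (diag_class a b) (parts n) <=
  size (parts n) + K * count (fun y => ones y <= K) (parts n).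
Proof.
set few := fun y => ones y <= K.
have many : count (diag_class a b) (parts n) <=
    count (fun y => diag_class a b y && (K < ones y)) (parts n) + count few (parts n).
  rewrite -count_predUI; apply: leq_trans (leq_addr _ _).
  by apply: sub_count => y /= ->; rewrite /few; case: ltnP.
have hooks : K * count (fun y => diag_class a b y && (K < ones y)) (parts n) <= size (parts n).
  rewrite -[K in K * _](size_iota 0) -sum_nat_const_seq.
  apply: leq_trans (_ : \sum_(j <- iota 0 K) count (diag_class (a + 2 * j) b) (parts n) <= _).
    rewrite big_seq [leqRHS]big_seq; apply: leq_sum => j; rewrite mem_iota => /andP[_ jK].
    apply: (leq_count_inj (f := hook j) (uniq_parts n)) => [s t|s].
      rewrite !inE !mem_parts => /andP[ps /andP[_ Ks]] /andP[pt /andP[_ Kt]].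
      by apply: hook_inj ps pt _ _; apply: leq_trans jK _; apply: ltnW.
    rewrite mem_parts => ps /andP[/eqP cs Ks].
    have [ph hh sh] := hook_part ps (leq_trans jK (ltnW Ks)).
    by rewrite mem_parts ph /diag_class hh; apply/eqP; lia.
  apply: sum_count_le_size => y; rewrite sum_nat_boolE.
  by apply: count_uniq_le1 (iota_uniq _ _) _ => i j /eqP ? /eqP ?; lia.
by apply: leq_trans (leq_mul (leqnn K) many) _; rewrite mulnDr leq_add2r.
Qed.

Definition unhook i (s : seq nat) := sort geq ((head 0 s - i) :: behead s ++ nseq i 1).

Lemma perm_unhook i x t : perm_eq (unhook i (x :: t)) ((x - i) :: t ++ nseq i 1).
Proof. exact: permEl (perm_sort _ _). Qed.

Lemma unhook_part n i x t : is_part n (x :: t) -> i.+2 <= x ->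
  [/\ is_part n (unhook i (x :: t)), ones (unhook i (x :: t)) = ones t + i
    & head 0 (unhook i (x :: t)) <= x].
Proof.
move=> /and3P[Ss /= /andP[x_gt0 t_gt0] /eqP sum_s] ix; have tx := order_path_min geq_trans Ss.
have x1 : (x == 1) = false by apply/negbTE; lia.
split.
- apply/and3P; split.
  + exact: sort_sorted geq_total _.
  + rewrite (perm_all _ (perm_unhook i x t)) /= all_cat t_gt0 subn_gt0 /=.
    by apply/andP; split; [lia | apply/allP => z; rewrite mem_nseq => /andP[_ /eqP ->]].
  + rewrite (perm_sumn (perm_unhook i x t)) /= sumn_cat sumn_nseq -sum_s; apply/eqP; lia.
- rewrite /ones (permP (perm_unhook i x t)) /= count_cat count_nseq /= mul1n.
  by have -> : (x - i == 1) = false by apply/negbTE; lia.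
- apply: head_sort_geq_le; rewrite /= leq_subr all_cat tx /=.
  by apply/allP => z; rewrite mem_nseq => /andP[_ /eqP ->].
Qed.

Definition nones n k := count (fun y => ones y == k) (parts n).

(* [unhook i] is at most [i + 1]-to-one: the preimage is recovered from the image and
   from how far its shortened first row [x - i] lies below the largest part. *)
Lemma count_unhook_le n k i :
  count (fun y => (ones y == k) && (i.+2 <= head 0 y)) (parts n) <= i.+1 * nones n (k + i).
Proof.
pose tag s := head 0 (unhook i s) - (head 0 s - i).
apply: (leq_count_mul_inj (f := unhook i) (g := tag) (uniq_parts n)) => [s s'|s].
  rewrite !inE !mem_parts => /andP[ps /andP[_ ix]] /andP[ps' /andP[_ ix']] [us tag_s].
  case: s ps ix us tag_s => [|x t] //; case: s' ps' ix' => [|x' t'] //.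
  move=> /and3P[Ss' _ _] /= ix' /and3P[Ss _ _] /= ix us; rewrite /tag us /= => tag_s.
  have hx : x - i <= head 0 (unhook i (x' :: t')) by rewrite -us leq_head_sort_geq ?mem_head.
  have hx' : x' - i <= head 0 (unhook i (x' :: t')) by rewrite leq_head_sort_geq ?mem_head.
  have xx' : x = x' by move: hx hx' tag_s; set h := head 0 _; clear -ix ix'; lia.
  move: us; rewrite -xx' => /(perm_sortP geq_total geq_trans geq_anti) /=.
  rewrite perm_cons perm_cat2r => tt'; congr cons.
  exact: (sorted_eq geq_trans geq_anti (path_sorted Ss) (path_sorted Ss') tt').
rewrite mem_parts; case: s => [|x t] ps /andP[/eqP ones_s ix] //.
have [pu ones_u hu] := unhook_part ps ix.
have x1 : (x == 1) = false by apply/negbTE; move: ix => /=; lia.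
rewrite mem_parts pu ones_u -ones_s /ones /= x1 eqxx /=.
by rewrite /tag /=; move: hu ix => /=; lia.
Qed.

Lemma nones_le n k i : nones n k <= i.+1 * nones n (k + i) + nbounded n i.+1.
Proof.
apply: leq_trans (leq_add (count_unhook_le n k i) (leqnn _)).
rewrite /nones /nbounded -count_predUI; apply: leq_trans (leq_addr _ _).
by apply: sub_count => y /= ->; case: ltnP.
Qed.

(* Average [nones_le] over the dyadic block [2 ^ r <= i < 2 ^ r.+1]. *)
Lemma nones_le_block n k r L : 2 ^ r.+1 <= L ->
  nones n k <= 2 * \sum_(i <- iota (2 ^ r) (2 ^ r)) nones n (k + i) + nbounded n L.
Proof.
move=> rL; have r_gt0 : 0 < 2 ^ r by rewrite expn_gt0.
rewrite -(leq_pmul2l r_gt0) mulnDr mulnA -expnSr.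
rewrite -[in 2 ^ r * nones n k](size_iota (2 ^ r) (2 ^ r)) -sum_nat_const_seq.
rewrite -[in 2 ^ r * nbounded n L](size_iota (2 ^ r) (2 ^ r)) -sum_nat_const_seq.
rewrite big_distrr -big_split big_seq [leqRHS]big_seq /=; apply: leq_sum => i.
rewrite mem_iota expnS mul2n -addnn => /andP[ri ir].
apply: leq_trans (nones_le n k i) _; apply: leq_add; first by rewrite leq_mul2r ir orbT.
by apply: nbounded_mono; apply: leq_trans rL; rewrite expnS mul2n -addnn.
Qed.

Lemma sum_dyadic_blocks (F : nat -> nat) R :
  \sum_(r <- iota 0 R) \sum_(i <- iota (2 ^ r) (2 ^ r)) F i = \sum_(i <- iota 1 (2 ^ R).-1) F i.
Proof.
elim: R => [|R IH]; first by rewrite expn0 !big_nil.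
have R_gt0 : 0 < 2 ^ R by rewrite expn_gt0.
have -> : (2 ^ R.+1).-1 = (2 ^ R).-1 + 2 ^ R by rewrite expnS; lia.
by rewrite -addn1 iotaD big_cat IH big_seq1 iotaD big_cat add1n prednK.
Qed.

Lemma sum_nones_le n k (I : seq nat) : uniq I -> \sum_(i <- I) nones n (k + i) <= size (parts n).
Proof.
move=> UI; apply: (@sum_count_le_size _ _ I (fun i y => ones y == k + i)) => y.
by rewrite sum_nat_boolE; apply: count_uniq_le1 UI _ => i j /eqP ? /eqP ?; lia.
Qed.

Lemma nones_le_dyadic n k R : R * nones n k <= 2 * size (parts n) + R * nbounded n (2 ^ R).
Proof.
have sumE c : R * c = \sum_(r <- iota 0 R) c by rewrite sum_nat_const_seq size_iota.
rewrite !sumE; apply: leq_trans (_ : \sum_(r <- iota 0 R)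
    (2 * \sum_(i <- iota (2 ^ r) (2 ^ r)) nones n (k + i) + nbounded n (2 ^ R)) <= _).
  rewrite big_seq [leqRHS]big_seq; apply: leq_sum => r; rewrite mem_iota add0n => rR.
  by apply: nones_le_block; rewrite leq_pexp2l.
rewrite big_split -big_distrr leq_add2r leq_mul2l sum_dyadic_blocks.
by rewrite sum_nones_le ?iota_uniq ?orbT.
Qed.

Lemma count_few_ones n K :
  count (fun y => ones y <= K) (parts n) = \sum_(k <- iota 0 K.+1) nones n k.
Proof.
rewrite /nones (eq_bigr (fun k => \sum_(y <- parts n) (ones y == k : nat))); last first.
  by move=> k _; rewrite sum_nat_boolE.
rewrite exchange_big -sum_nat_boolE; apply: eq_bigr => y _.
rewrite sum_nat_boolE (@eq_count _ _ (pred1 (ones y))) => [|k]; last by rewrite /= eq_sym.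
by rewrite count_uniq_mem ?iota_uniq // mem_iota add0n ltnS.
Qed.

Lemma count_few_ones_le n K R : R * count (fun y => ones y <= K) (parts n) <=
  K.+1 * (2 * size (parts n) + R * nbounded n (2 ^ R)).
Proof.
rewrite count_few_ones big_distrr.
have -> : K.+1 * (2 * size (parts n) + R * nbounded n (2 ^ R)) =
  \sum_(k <- iota 0 K.+1) (2 * size (parts n) + R * nbounded n (2 ^ R)).
  by rewrite sum_nat_const_seq size_iota.
by apply: leq_sum => k _; apply: nones_le_dyadic.
Qed.

Lemma few_ones_negligible K m :
  exists N0, forall n, N0 <= n -> m * count (fun y => ones y <= K) (parts n) <= size (parts n).
Proof.
set R := 3 * m * K.+1; have [N0 small_bounded] := nbounded_negligible (2 ^ R) R.
exists N0 => n /small_bounded Rs; have := count_few_ones_le n K R.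
set o := count _ _; set p := size _; set s := nbounded _ _ => oR.
have K3_gt0 : 0 < 3 * K.+1 by [].
rewrite -(leq_pmul2l K3_gt0) mulnA [3 * _ * m]mulnAC -/R; apply: leq_trans oR _.
by rewrite [3 * _ * p]mulnAC [K.+1 * _]mulnC leq_mul2r; apply/orP; right; lia.
Qed.

Lemma count_balanced_le (r : seq (seq nat)) :
  count balanced r <=
  count (diag_class 0 1) r + count (diag_class 0 0) r + count (diag_class 1 0) r.
Proof.
elim: r => [|y r IH] //=.
have : (balanced y : nat) <= diag_class 0 1 y + diag_class 0 0 y + diag_class 1 0 y.
  rewrite /balanced /diag_class.
  by case: leqP; case: leqP; case: eqP; case: eqP; case: eqP => //=; lia.
lia.
Qed.

Lemma balanced_negligible m :
  exists N0, forall n, N0 <= n -> m * count balanced (parts n) <= size (parts n).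
Proof.
set K := 6 * m; have [N0 few_small] := few_ones_negligible K K.
exists N0 => n /few_small Ko.
have : K * count balanced (parts n) <= 6 * size (parts n).
  apply: leq_trans (leq_mul (leqnn K) (count_balanced_le _)) _; rewrite !mulnDr.
  have := count_diag_class_le n 0 1 K; have := count_diag_class_le n 0 0 K.
  by have := count_diag_class_le n 1 0 K; lia.
by rewrite /K -mulnA leq_pmul2l.
Qed.

(** * The degree of a map *)

Section Degree.
Variables (X Y : finType) (f : X -> Y).

Lemma sum_card_fibers : \sum_(y : Y) #|[set x | f x == y]| = #|X|.
Proof.
rewrite -sum1_card (partition_big f xpredT) //=; apply: eq_bigr => y _.
by rewrite -sum1_card; apply: eq_bigl => x; rewrite inE.
Qed.

(* [(k - 1) (k - 2) >= 0] for every fiber size [k > 0], and [codom f] counts the fibers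
   with [k > 0]. *)
Lemma sum_card_fibers_sq_ge :
  3 * #|X| <= \sum_(y : Y) #|[set x | f x == y]| ^ 2 + 2 * #|codom f|.
Proof.
have codomE : #|codom f| = \sum_(y : Y) (0 < #|[set x | f x == y]| : nat).
  rewrite -sum1_card big_mkcond; apply: eq_bigr => y _.
  congr nat_of_bool; apply/codomP/card_gt0P => [[x ->]|[x]]; first by exists x; rewrite inE.
  by rewrite inE => /eqP <-; exists x.
rewrite -sum_card_fibers codomE !big_distrr -big_split /=; apply: leq_sum => y _.
by case: #|_| => [|k] //=; nia.
Qed.

Local Open Scope ring_scope.

Lemma deg_le_max_fiber : deg f <= (\max_(y : Y) #|[set x | f x == y]|)%:R.
Proof.
rewrite /deg; have [->|X_gt0] := posnP #|X|; first by rewrite invr0 mulr0 ler0n.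
rewrite ler_pdivrMr ?ltr0n // -sum_card_fibers natr_sum mulr_sumr; apply: ler_sum => y _.
by rewrite expr2 mulrC ler_wpM2r // ler_nat (leq_bigmax y).
Qed.

Lemma deg_ge_codom : (0 < #|X|)%N -> 3 - 2 * #|codom f|%:R / #|X|%:R <= deg f.
Proof.
move=> X_gt0; rewrite /deg ler_pdivlMr ?ltr0n // mulrBl divfK ?pnatr_eq0 -?lt0n //.
rewrite lerBlDr (eq_bigr (fun y => (#|[set x | f x == y]| ^ 2)%:R)) => [|y _]; last first.
  by rewrite natrX.
by rewrite -natr_sum -!natrM -natrD ler_nat sum_card_fibers_sq_ge.
Qed.

End Degree.

Local Open Scope ring_scope.

Lemma max_fiber_B_bound n : (0 < n)%N ->
  let M := \max_(y : Part n) #|[set x | B x == y]| in (3 * (M * M.-1) <= 2 * n)%N.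
Proof.
move=> n_gt0 /=; apply: (big_ind (fun k => 3 * (k * k.-1) <= 2 * n)%N) => // [k l kn ln|y _].
  by case: (leqP k l).
apply: leq_trans (nlarge_parts_bound (is_part_ssval y)); have := card_fiber_B_le y n_gt0.
by move=> dl; rewrite leq_mul2l leq_mul // -!subn1 leq_sub2r.
Qed.

Lemma degB_ge n m : (0 < n)%N -> (0 < m)%N ->
  (m * count balanced (parts n) <= size (parts n))%N -> 2 - m%:R^-1 <= degB n.
Proof.
move=> n_gt0 m_gt0 bal_le; have p_gt0 := size_parts_gt0 n.
apply: le_trans (deg_ge_codom (@B n) _); last by rewrite card_Part.
rewrite card_Part.
have := leq_trans (leq_mul (leqnn 2) (card_codom_B_le n_gt0)) (count_bulg_shape_le n).
set c := #|_|; set p := size _; set b := count _ _ => cb.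
have bp : b%:R <= p%:R / m%:R :> rat by rewrite ler_pdivlMr ?ltr0n // mulrC -natrM ler_nat.
have cp : 2 * c%:R / p%:R <= 1 + m%:R^-1 :> rat.
  rewrite ler_pdivrMr ?ltr0n //; apply: le_trans (_ : (p + b)%:R <= _).
    by rewrite -natrM ler_nat.
  by rewrite natrD mulrDl mul1r lerD2l mulrC.
by move: cp; lra.
Qed.

Lemma floor_bound (R : realType) n d : (3 * (d * d.-1) <= 2 * n)%N ->
  (d%:R : R) <= (Num.floor ((1 + Num.sqrt ((8 / 3) * n%:R + 1 : R)) / 2 : R))%:~R.
Proof.
move=> dn; rewrite -[d%:R]/((d%:Z)%:~R : R) ler_int floor_ge_int /= -pmulrn.
set X := (8 / 3) * n%:R + 1 : R.
have sqrt_ge0 : 0 <= Num.sqrt X by apply: sqrtr_ge0.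
case: d dn => [|d] dn; first by rewrite ler_pdivlMr //; lra.
have dnR : 3 * (d.+1%:R * d%:R) <= 2 * n%:R :> R by rewrite -!natrM ler_nat.
have dX : (2 * d%:R + 1) ^+ 2 <= X by rewrite -[d.+1]addn1 natrD in dnR; rewrite /X; lra.
have dsqrt : 2 * d%:R + 1 <= Num.sqrt X.
  have n_ge0 : 0 <= n%:R :> R := ler0n _ _.
  move: dX; rewrite -ler_sqrt; last by rewrite /X; lra.
  by rewrite sqrtr_sqr ger0_norm //; lra.
by rewrite ler_pdivlMr // -[d.+1]addn1 natrD; lra.
Qed.

Lemma degB_le_floor (R : realType) n : (0 < n)%N ->
  (ratr (degB n) : R) <= (Num.floor ((1 + Num.sqrt ((8 / 3) * n%:R + 1 : R)) / 2 : R))%:~R.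
Proof.
move=> n_gt0; have /= /(@floor_bound R) M_le := max_fiber_B_bound n_gt0.
by apply: le_trans M_le; rewrite -ratr_nat ler_rat deg_le_max_fiber.
Qed.

Lemma degB_eventually_ge (R : realType) (e : R) : 0 < e ->
  exists N, forall n, (N <= n)%N -> 2 - e <= ratr (degB n).
Proof.
move=> e_gt0; have e_inv_ge0 : 0 <= e^-1 by rewrite invr_ge0 ltW.
have := archi_boundP e_inv_ge0; set m := Num.bound _ => em.
have m_gt0 : (0 < m)%N by rewrite -(ltr0n R) (le_lt_trans e_inv_ge0 em).
have [N0 bal_small] := balanced_negligible m.
exists N0.+1 => n Nn; have n_gt0 : (0 < n)%N by apply: leq_trans Nn.
apply: le_trans (_ : ratr (2 - m%:R^-1) <= _); last first.
  by rewrite ler_rat degB_ge // bal_small // ltnW.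
rewrite rmorphB fmorphV /= !ratr_nat lerD2l lerN2 invf_ple ?posrE ?ltr0n //.
exact: ltW.
Qed.

Lemma limn_einf_ge (R : realType) (u : nat -> R) (c : R) :
  (forall e : R, 0 < e -> exists N, forall n, (N <= n)%N -> c - e <= u n) ->
  (c%:E <= limn_einf (fun n => (u n)%:E))%E.
Proof.
move=> u_ge; apply/lee_subgt0Pr => e e_gt0; have [N uN] := u_ge e e_gt0.
rewrite limn_einf_lim; apply: lime_ge; first exact: is_cvg_einfs.
near=> m; apply: le_ereal_inf_tmp => _ [k /= mk <-].
by rewrite -EFinB lee_fin; apply: uN; apply: leq_trans mk; near: m; exists N.
Unshelve. all: by end_near. Qed.

Theorem mainTheorem14 (R : realType) :
  (2%:E <= limn_einf (fun n : nat => (ratr (degB n) : R)%:E))%E /\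
  (forall n : nat, (0 < n)%N ->
     (ratr (degB n) : R) <=
       (Num.floor ((1 + Num.sqrt ((8 / 3) * n%:R + 1 : R)) / 2 : R))%:~R).
Proof.
split; last exact: degB_le_floor.
by apply: limn_einf_ge; apply: degB_eventually_ge.
Qed.
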